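(* Assume Case 3 holds. Let $\mathcal{I}_f=[\alpha,l_2]$ if $\gamma>0$ and $\mathcal{I}_f=(0,l_2]$ if $\gamma=0$. Then for every $n\ge1$, $Q^n$ contains the term $z^{\gamma_n}w^{d^n}$, and for every $l\in\mathcal{I}_f$, $$w_l(Q^n)=w_l(z^{\gamma_n}w^{d^n})=\gamma_n+l\,d^n.$$
   Context: Let $f(z,w)=(p(z),q(z,w))$ be a holomorphic skew product germ at the origin of $\mathbb{C}^2$ with $f(0,0)=(0,0)$, where $p(z)=a_\delta z^\delta+O(z^{\delta+1})$ with $a_\delta\neq0$ and integer $\delta\ge1$, and $q(z,w)=\sum_{i+j\ge1}b_{ij}z^iw^j$ is not identically zero. For $n\ge1$ write $f^n=(p^n,Q^n)$. For a nonzero germ $g=\sum g_{ij}z^iw^j$, say $g$ contains $z^aw^b$ if $g_{ab}\neq0$, and for real $l>0$ let $w_l(g)=\min\{i+lj: g_{ij}\neq0\}$. The Newton polygon $N(g)$ is the convex hull of $\bigcup_{g_{ij}\neq0}\{(x,y):x\ge i,\ y\ge j\}$. Let $(n_1,m_1),\dots,(n_s,m_s)$ be the vertices of $N(q)$ with $n_1<\cdots<n_s$, $m_1>\cdots>m_s$; for $1\le k\le s-1$ let $T_k$ be the $y$-intercept of the line through $(n_k,m_k)$ and $(n_{k+1},m_{k+1})$. Case 3 means: $s>1$ and $T_1\le\delta$; set $(\gamma,d)=(n_1,m_1)$ and $l_2=\frac{n_2-n_1}{m_1-m_2}$ (then $\delta\ge d>0$, and $\delta>d$ if $\gamma>0$).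 Define $\gamma_n=\gamma(\delta^{n-1}+\delta^{n-2}d+\cdots+d^{n-1})$ and $\alpha=\gamma/(\delta-d)$ when $\delta\neq d$. *)

From HB Require Import structures.
From mathcomp Require Import all_boot all_order all_algebra.
From mathcomp Require Import reals.
From mathcomp Require Import complex.
Set Implicit Arguments. Unset Strict Implicit. Unset Printing Implicit Defensive.
Import Order.TTheory GRing.Theory Num.Theory.
Local Open Scope ring_scope.

Section Defs.
Variable R : realType.
Local Notation C := R[i].

Definition ser1 := nat -> C.
(* A formal power series in (z,w): s a b = coefficient of z^a w^b. *)
Definition ser2 := nat -> nat -> C.

Definition one2 : ser2 := fun a b => ((a == 0%N) && (b == 0%N))%:R.
Definition mul2 (s t : ser2) : ser2 := fun a b =>
  \sum_(i < a.+1) \sum_(j < b.+1) s i j * t (a - i)%N (b - j)%N.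
Definition pow2 (s : ser2) (k : nat) : ser2 := iter k (mul2 s) one2.
Definition lift1 (u : ser1) : ser2 := fun a b => if b == 0%N then u a else 0.

(* Formal composition g(u(z)) for u without constant term. *)
Definition comp1 (g u : ser1) : ser1 := fun a =>
  \sum_(i < a.+1) g i * pow2 (lift1 u) i a 0%N.
(* Formal composition g(u(z), v(z,w)) for u, v without constant term
   (terms with i + j > a + b cannot contribute to the coefficient of z^a w^b). *)
Definition comp2 (g : ser2) (u : ser1) (v : ser2) : ser2 := fun a b =>
  \sum_(i < (a + b).+1) \sum_(j < (a + b).+1)
     g i j * mul2 (pow2 (lift1 u) i) (pow2 v j) a b.

(* iterates of the skew product f = (p, q):  f^n = (p^n, Q^n),
   f^(n+1) = f o f^n, i.e. p^(n+1) = p(p^n), Q^(n+1) = q(p^n(z), Q^n(z,w)). *)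
Fixpoint piter (p : ser1) (n : nat) : ser1 :=
  match n with
  | 0 => fun a => (a == 1%N)%:R
  | n'.+1 => comp1 p (piter p n')
  end.
Fixpoint Qiter (p : ser1) (q : ser2) (n : nat) : ser2 :=
  match n with
  | 0 => fun a b => ((a == 0%N) && (b == 1%N))%:R
  | n'.+1 => comp2 q (piter p n') (Qiter p q n')
  end.

(* holomorphic germs = power series with positive radius of convergence *)
Definition holo1 (p : ser1) : Prop :=
  exists M rho : R, forall i, `|p i| <= ((M * rho ^+ i)%:C)%C.
Definition holo2 (q : ser2) : Prop :=
  exists M rho : R, forall i j, `|q i j| <= ((M * rho ^+ (i + j))%:C)%C.

Definition monom (a b : nat) : ser2 := fun i j => ((i == a) && (j == b))%:R.

Definition wl_is (g : ser2) (l v : R) : Prop :=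
  (exists i j, g i j != 0 /\ i%:R + l * j%:R = v) /\
  (forall i j, g i j != 0 -> v <= i%:R + l * j%:R).

(* Newton polygon of g: convex hull of the union of the quadrants
   {(x,y) : x >= i, y >= j} over the support of g. *)
Definition quadrants (g : ser2) (P : R * R) : Prop :=
  exists i j, g i j != 0 /\ i%:R <= P.1 /\ j%:R <= P.2.
Definition newton_polygon (g : ser2) (P : R * R) : Prop :=
  exists (k : nat) (c : 'I_k -> R) (pt : 'I_k -> R * R),
    (forall t, 0 <= c t) /\ \sum_(t < k) c t = 1 /\
    (forall t, quadrants g (pt t)) /\
    P = (\sum_(t < k) c t * (pt t).1, \sum_(t < k) c t * (pt t).2).
Definition np_vertex (g : ser2) (P : R * R) : Prop :=
  newton_polygon g P /\
  forall (A B : R * R) (t : R), newton_polygon g A -> newton_polygon g B ->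
    0 < t < 1 -> P = (t * A.1 + (1 - t) * B.1, t * A.2 + (1 - t) * B.2) ->
    A = B.

Definition gamma_n (gamma delta d n : nat) : nat :=
  (gamma * \sum_(k < n) delta ^ (n.-1 - k) * d ^ k)%N.

End Defs.

From HB Require Import structures.
From mathcomp Require Import all_boot all_order all_algebra.
From mathcomp Require Import reals.
From mathcomp Require Import complex.
From mathcomp.algebra_tactics Require Import ring lra.
From mathcomp Require Import zify.
From Stdlib Require Wf_nat Classical_Prop.
Import Order.TTheory GRing.Theory Num.Theory.
Local Open Scope ring_scope.
Set Implicit Arguments. Unset Strict Implicit. Unset Printing Implicit Defensive.

(* Theorem 5.1, Case 3.  All series are formal; the l-weight of z^i w^j is
   wt l i j = i + l j, and A = m_1 - m_2, B = n_2 - n_1 describe the first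
   edge of N(q), so that l_2 = B / A.

   If the support of q lies to the right
      of gamma and on or above the first edge, and T_1 <= delta, then the
      monomial z^gamma w^d of q(p^n, Q^n) dominates: for 0 < l <= B/A every
      monomial of Q^n weighs at least wt l gamma_n d^n, and for 0 < l < B/A
      z^gamma_n w^(d^n) is strictly leading.  The invariant making the
      induction work is weight_budget.
   3. Newton polygon.  From the vertex hypotheses we recover the facts used in
      2: (gamma, d) is in the support, the support lies to the right of gamma
      and above the line through (gamma, d) and (n_2, m_2), and m_2 < d.
   4. The theorem: every l in I_f lies in (0, l_2]; the monomial occurs in Q^n
      by 2 (applied at weight l_2 / 2), and it realizes w_l(Q^n) by 2. *)

Section WeightedOrder.
Variable R : realType.
Local Notation C := R[i].

Definition wt (l : R) (i j : nat) : R := i%:R + l * j%:R.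

Definition weight_lb (l v : R) (s : ser2 R) : Prop :=
  forall i j, s i j != 0 -> v <= wt l i j.

Definition strict_lead (l : R) (a b : nat) (s : ser2 R) : Prop :=
  s a b != 0 /\
  forall i j, s i j != 0 -> (i != a) || (j != b) -> wt l a b < wt l i j.

Lemma wtD l i j i' j' : wt l (i + i') (j + j') = wt l i j + wt l i' j'.
Proof. by rewrite /wt !natrD; ring. Qed.

Lemma wt_split l a b i j : (i <= a)%N -> (j <= b)%N ->
  wt l i j + wt l (a - i) (b - j) = wt l a b.
Proof. by move=> le_ia le_jb; rewrite -wtD !subnKC. Qed.

Lemma sum_neq0 n (F : 'I_n -> C) : \sum_(i < n) F i != 0 -> exists i, F i != 0.
Proof.
case: (pickP (fun i => F i != 0)) => [i Fi|F0]; first by exists i.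
by rewrite big1 ?eqxx // => i _; move/negbFE: (F0 i) => /eqP.
Qed.

Lemma sum2_single N M (F : nat -> nat -> C) i0 j0 : (i0 < N)%N -> (j0 < M)%N ->
  (forall i j, (i < N)%N -> (j < M)%N -> (i != i0) || (j != j0) -> F i j = 0) ->
  \sum_(i < N) \sum_(j < M) F i j = F i0 j0.
Proof.
move=> ltiN ltjM F0.
rewrite (bigD1 (Ordinal ltiN)) //= (bigD1 (Ordinal ltjM)) //=.
rewrite big1 => [|j /= ne_j]; last by apply: F0; rewrite // orbC ne_j.
rewrite big1 ?addr0 // => i /= ne_i; rewrite big1 // => j _.
by apply: F0; rewrite // ne_i.
Qed.

Lemma mul2_neq0 (s t : ser2 R) a b : mul2 s t a b != 0 ->
  exists i j, [/\ (i <= a)%N, (j <= b)%N, s i j != 0 & t (a - i)%N (b - j)%N != 0].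
Proof.
move=> /sum_neq0[i /sum_neq0[j]]; rewrite mulf_eq0 negb_or => /andP[si tj].
by exists i, j; split; rewrite // -ltnS.
Qed.

Lemma strict_lead_lb l a b s : strict_lead l a b s -> weight_lb l (wt l a b) s.
Proof.
move=> [_ lead_s] i j sij; case: (boolP ((i != a) || (j != b))) => [ne|].
  exact/ltW/lead_s.
by rewrite negb_or !negbK => /andP[/eqP -> /eqP ->].
Qed.

Lemma weight_lb_mul l v1 v2 s t :
  weight_lb l v1 s -> weight_lb l v2 t -> weight_lb l (v1 + v2) (mul2 s t).
Proof.
move=> lb_s lb_t a b /mul2_neq0[i [j [le_ia le_jb sij tij]]].
by rewrite -(wt_split l le_ia le_jb) lerD ?lb_s ?lb_t.
Qed.

Lemma strict_lead_mul l a1 b1 a2 b2 s t :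
  strict_lead l a1 b1 s -> strict_lead l a2 b2 t ->
  strict_lead l (a1 + a2) (b1 + b2) (mul2 s t).
Proof.
move=> lead_s lead_t; have lb_s := strict_lead_lb lead_s.
have lb_t := strict_lead_lb lead_t.
have heavy i j a b : (i <= a)%N -> (j <= b)%N -> s i j != 0 ->
    t (a - i)%N (b - j)%N != 0 -> (i != a1) || (j != b1) ->
    wt l (a1 + a2) (b1 + b2) < wt l a b.
  move=> le_ia le_jb sij tij ne; rewrite wtD -(wt_split l le_ia le_jb).
  by apply: ltr_leD; [exact: lead_s.2 | exact: lb_t].
split.
  rewrite /mul2 (sum2_single (i0 := a1) (j0 := b1)
    (F := fun i j => s i j * t (a1 + a2 - i)%N (b1 + b2 - j)%N))
    ?addKn ?ltnS ?leq_addr //.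
    by rewrite mulf_neq0 //; [case: lead_s | case: lead_t].
  move=> i j; rewrite !ltnS => le_i le_j ne.
  apply/eqP; rewrite mulf_eq0; apply: contraT; rewrite negb_or => /andP[sij tij].
  by have := heavy _ _ _ _ le_i le_j sij tij ne; rewrite ltxx.
move=> a b /mul2_neq0[i [j [le_ia le_jb sij tij]]] ne_ab.
case: (boolP ((i != a1) || (j != b1))) => [|]; first exact: heavy.
rewrite negb_or !negbK => /andP[/eqP ei /eqP ej]; subst i j.
rewrite -(wt_split l le_ia le_jb) wtD ltrD2l; apply: lead_t.2 => //.
move: ne_ab; apply: contraTT; rewrite !negb_or !negbK => /andP[/eqP <- /eqP <-].
by rewrite !subnKC ?eqxx.
Qed.

(* A monomial is led by itself; this covers one2 = z^0 w^0 and Q^0 = w. *)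
Lemma strict_lead_monom l a b : strict_lead l a b (monom R a b).
Proof.
split=> [|i j]; first by rewrite /monom !eqxx oner_neq0.
by rewrite /monom; case: (i =P a); case: (j =P b); rewrite //= eqxx.
Qed.

Lemma strict_lead_pow l a b s k :
  strict_lead l a b s -> strict_lead l (k * a) (k * b) (pow2 s k).
Proof.
move=> lead_s; elim: k => [|k IH]; first exact: (strict_lead_monom l 0 0).
by rewrite !mulSn; apply: strict_lead_mul.
Qed.

Lemma weight_lb_pow l v s k : weight_lb l v s -> weight_lb l (k%:R * v) (pow2 s k).
Proof.
move=> lb_s; elim: k => [|k IH].
  rewrite mul0r; have := strict_lead_lb (strict_lead_monom l 0 0).
  by rewrite /wt mulr0 addr0.
by rewrite -natr1 mulrDl mul1r addrC; apply: weight_lb_mul.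
Qed.

Lemma strict_lead_lift1 l (u : ser1 R) e :
  (forall i, (i < e)%N -> u i = 0) -> u e != 0 -> strict_lead l e 0 (lift1 u).
Proof.
move=> u_lt u_e; split=> [|i j]; first by rewrite /lift1 eqxx.
rewrite /lift1; case: (eqVneq j 0%N) => [->|]; last by rewrite eqxx.
rewrite orbF => ui ne_ie; rewrite /wt ltrD2r ltr_nat ltn_neqAle eq_sym ne_ie /=.
by rewrite leqNgt; apply: contra ui => /u_lt ->; rewrite eqxx.
Qed.

End WeightedOrder.

Lemma wl_is_weight_lb (R : realType) (s : ser2 R) l a b :
  s a b != 0 -> weight_lb l (wt l a b) s -> wl_is s l (wt l a b).
Proof. by move=> sab lb; split=> //; exists a, b. Qed.

Lemma comp2_neq0 (R : realType) (g : ser2 R) u v a b : comp2 g u v a b != 0 ->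
  exists i j, g i j != 0 /\ mul2 (pow2 (lift1 u) i) (pow2 v j) a b != 0.
Proof.
move=> /sum_neq0[i /sum_neq0[j]]; rewrite mulf_eq0 negb_or => /andP[gij nz].
by exists i, j.
Qed.

(* The exponents gamma_n satisfy gamma_0 = 0 and the recursion below, which
   records that the monomial z^gamma w^d of q maps z^gamma_n w^(d^n) to
   z^gamma_(n+1) w^(d^(n+1)) when p^n has order delta^n. *)
Lemma gamma_n0 g de d : gamma_n g de d 0 = 0%N.
Proof. by rewrite /gamma_n big_ord0 muln0. Qed.

Lemma gamma_nS g de d n :
  gamma_n g de d n.+1 = (g * de ^ n + d * gamma_n g de d n)%N.
Proof.
rewrite /gamma_n big_ord_recl /= subn0 expn0 muln1 mulnDr; congr (_ + _)%N.
rewrite mulnCA [(d * _)%N]big_distrr; congr (_ * _)%N; apply: eq_bigr => i _.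
rewrite /bump /= add1n expnS.
have -> : (n - i.+1 = n.-1 - i)%N by lia.
by rewrite mulnCA.
Qed.

Section Order.
Variables (R : realType) (p : ser1 R) (delta : nat).
Hypotheses (delta_gt0 : (0 < delta)%N) (p_delta : p delta != 0).
Hypothesis p_low : forall i, (i < delta)%N -> p i = 0.

Lemma comp1_order (u : ser1 R) e :
  (forall i, (i < e)%N -> u i = 0) -> u e != 0 -> (0 < e)%N ->
  (forall i, (i < delta * e)%N -> comp1 p u i = 0) /\ comp1 p u (delta * e) != 0.
Proof.
move=> u_low u_e e_gt0.
have lead k : strict_lead 0 (k * e) (k * 0) (pow2 (lift1 u) k).
  exact/strict_lead_pow/strict_lead_lift1.
have pow_low k i : pow2 (lift1 u) k i 0 != 0 -> (k * e <= i)%N.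
  move=> /(strict_lead_lb (lead k)).
  by rewrite /wt !mul0r !addr0 ler_nat.
split=> [i lt_i|].
  apply: big1 => k _; case: (ltnP k delta) => [/p_low -> | le_dk].
    by rewrite mul0r.
  apply/eqP; rewrite mulf_eq0; apply/orP; right; apply: contraLR lt_i => /pow_low.
  by rewrite -leqNgt; apply: leq_trans; rewrite leq_mul2r le_dk orbT.
have lt_d : (delta < (delta * e).+1)%N by rewrite ltnS leq_pmulr.
rewrite /comp1 (bigD1 (Ordinal lt_d)) //= big1 ?addr0 => [|k ne_k].
  by rewrite mulf_neq0 //; have [+ _] := lead delta; rewrite muln0.
case: (ltnP k delta) => [/p_low -> | le_dk]; first by rewrite mul0r.
apply/eqP; rewrite mulf_eq0; apply/orP; right; apply: contraR ne_k => /pow_low.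
rewrite leq_pmul2r // => le_kd; apply/eqP/val_inj => /=.
by apply/eqP; rewrite eqn_leq le_kd le_dk.
Qed.

Lemma piter_order n :
  (forall i, (i < delta ^ n)%N -> piter p n i = 0) /\ piter p n (delta ^ n)%N != 0.
Proof.
elim: n => [|n [low lead]].
  by split=> [i|]; rewrite /= ?expn0 ?eqxx ?oner_neq0 // ltnS leqn0 => /eqP ->.
by rewrite expnS; apply: comp1_order; rewrite // expn_gt0 delta_gt0.
Qed.

End Order.

Section Iteration.
Variables (R : realType) (p : ser1 R) (q : ser2 R) (delta gamma d : nat).
Variables (A B : R).
Hypotheses (delta_gt0 : (0 < delta)%N) (p_delta : p delta != 0).
Hypothesis p_low : forall i, (i < delta)%N -> p i = 0.
Hypotheses (q_first : q gamma d != 0) (d_gt0 : (0 < d)%N).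
Hypothesis A_gt0 : 0 < A.
(* the support of q lies to the right of gamma and above the first edge of
   N(q), of slope -A/B through (gamma, d) *)
Hypothesis supp_right : forall i j, q i j != 0 -> (gamma <= i)%N.
Hypothesis supp_edge : forall i j, q i j != 0 ->
  A * gamma%:R + B * d%:R <= A * i%:R + B * j%:R.
(* Case 3: the first edge meets the vertical axis at height T_1 <= delta *)
Hypothesis edge_slope : A * gamma%:R <= B * (delta%:R - d%:R).

(* The identity behind the next two lemmas: the (e, W)-weight of a monomial
   of q exceeds that of (gamma, d) by a combination of its height over the
   edge and of its vertical distance to d. *)
Lemma weight_gap (e W : R) i j :
  A * (e * i%:R + W * j%:R - (e * gamma%:R + W * d%:R)) =
  e * (A * i%:R + B * j%:R - (A * gamma%:R + B * d%:R)) +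
  (B * e - A * W) * (d%:R - j%:R).
Proof. by ring. Qed.

Lemma support_weight_ge (e W : R) i j : 0 < e -> 0 <= W -> A * W <= B * e ->
  q i j != 0 -> e * gamma%:R + W * d%:R <= e * i%:R + W * j%:R.
Proof.
move=> e_gt0 W_ge0 slope qij.
have le_i : gamma%:R <= i%:R :> R by rewrite ler_nat (supp_right qij).
have above := supp_edge qij.
case: (leqP d j) => [le_j|lt_j].
  have : 0 <= e * (i%:R - gamma%:R) by rewrite mulr_ge0 ?subr_ge0 // ltW.
  have : 0 <= W * (j%:R - d%:R) by rewrite mulr_ge0 ?subr_ge0 ?ler_nat.
  lra.
have gap_ge0 : 0 <= A * (e * i%:R + W * j%:R - (e * gamma%:R + W * d%:R)).
  rewrite weight_gap addr_ge0 // mulr_ge0 ?subr_ge0 //; first exact: ltW.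
  by rewrite ler_nat ltnW.
by move: gap_ge0; rewrite pmulr_rge0 // subr_ge0.
Qed.

Lemma support_weight_gt (e W : R) i j : 0 < e -> 0 < W -> A * W < B * e ->
  q i j != 0 -> (i != gamma) || (j != d) ->
  e * gamma%:R + W * d%:R < e * i%:R + W * j%:R.
Proof.
move=> e_gt0 W_gt0 slope qij ne.
have le_i : (gamma <= i)%N := supp_right qij.
have above := supp_edge qij.
case: (ltnP j d) => [lt_j|le_j].
  have gap_gt0 : 0 < A * (e * i%:R + W * j%:R - (e * gamma%:R + W * d%:R)).
    rewrite weight_gap ltr_pwDr ?mulr_gt0 ?mulr_ge0 ?subr_gt0 ?subr_ge0 ?ltr_nat //.
    exact: ltW.
  by move: gap_gt0; rewrite pmulr_rgt0 // subr_gt0.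
have le_j' : d%:R <= j%:R :> R by rewrite ler_nat.
have le_i' : gamma%:R <= i%:R :> R by rewrite ler_nat.
case: (ltnP gamma i) => [lt_i|le_ig].
  have : 0 < e * (i%:R - gamma%:R) by rewrite mulr_gt0 // subr_gt0 ltr_nat.
  have : 0 <= W * (j%:R - d%:R) by rewrite mulr_ge0 ?subr_ge0 // ltW.
  lra.
have iE : i = gamma by apply/eqP; rewrite eqn_leq le_ig le_i.
move: ne; rewrite iE eqxx /= => ne_j.
have : 0 < W * (j%:R - d%:R).
  by rewrite mulr_gt0 // subr_gt0 ltr_nat ltn_neqAle eq_sym ne_j.
lra.
Qed.

(* The slack B delta^n - A wt l gamma_n d^n measures how much less steep the
   weights (delta^n, wt l gamma_n d^n) are than the edge; since T_1 <= delta
   it grows at least by the factor d at each iteration. *)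
Lemma weight_budget n l :
  (d ^ n)%:R * (B - A * l) <=
  B * (delta ^ n)%:R - A * wt l (gamma_n gamma delta d n) (d ^ n).
Proof.
elim: n => [|n IH].
  by rewrite gamma_n0 /wt !expn0 mul1r mulr1 add0r mulr1.
rewrite gamma_nS !expnS; set G := gamma_n gamma delta d n in IH *.
move: IH; rewrite /wt !natrD !natrM.
set e : R := (delta ^ n)%:R; set D : R := (d ^ n)%:R.
move=> IH; have := ler_wpM2l (ler0n R d) IH.
have : A * gamma%:R * e <= B * (delta%:R - d%:R) * e.
  by rewrite ler_wpM2r // ler0n.
lra.
Qed.

Section Composition.
Variables (u : ser1 R) (e : nat) (l : R).
Hypotheses (e_gt0 : (0 < e)%N) (u_e : u e != 0).
Hypothesis u_low : forall i, (i < e)%N -> u i = 0.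

Let e_pos : (0 : R) < e%:R. Proof. by rewrite ltr0n. Qed.

Lemma comp2_weight_lb (v : ser2 R) W : 0 <= W -> A * W <= B * e%:R ->
  weight_lb l W v -> weight_lb l (e%:R * gamma%:R + W * d%:R) (comp2 q u v).
Proof.
move=> W_ge0 slope lb_v a b /comp2_neq0[i [j [qij nz]]].
have lb_u := strict_lead_lb (strict_lead_lift1 l u_low u_e).
have := weight_lb_mul (weight_lb_pow (k := i) lb_u) (weight_lb_pow (k := j) lb_v) nz.
have := support_weight_ge e_pos W_ge0 slope qij.
rewrite /wt mulr0 addr0; lra.
Qed.

Lemma comp2_strict_lead (v : ser2 R) G D : (0 < D)%N ->
  0 < wt l G D -> A * wt l G D < B * e%:R -> strict_lead l G D v ->
  strict_lead l (gamma * e + d * G) (d * D) (comp2 q u v).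
Proof.
move=> D_gt0 W_gt0 slope lead_v; set W := wt l G D in W_gt0 slope.
pose T i j := mul2 (pow2 (lift1 u) i) (pow2 v j).
have lead_T : forall i j, strict_lead l (i * e + j * G) (i * 0 + j * D) (T i j).
  move=> i j; apply: strict_lead_mul; last exact: strict_lead_pow.
  exact/strict_lead_pow/strict_lead_lift1.
have wt_T : forall i j, wt l (i * e + j * G) (i * 0 + j * D) = e%:R * i%:R + W * j%:R.
  by move=> i j; rewrite /W /wt !natrD !natrM; ring.
have wt_target : wt l (gamma * e + d * G) (d * D) = e%:R * gamma%:R + W * d%:R.
  by rewrite -wt_T muln0 add0n mulnC.
have heavy : forall i j a b, q i j != 0 -> (i != gamma) || (j != d) ->
    T i j a b != 0 -> wt l (gamma * e + d * G) (d * D) < wt l a b.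
  move=> i j a b qij ne nz; rewrite wt_target.
  apply: lt_le_trans (support_weight_gt e_pos W_gt0 slope qij ne) _.
  by rewrite -wt_T; exact: strict_lead_lb (lead_T i j) _ _ nz.
have [lead_c lead_rest] : strict_lead l (gamma * e + d * G) (d * D) (T gamma d).
  by have := lead_T gamma d; rewrite muln0 add0n.
split.
  rewrite /comp2 (sum2_single (i0 := gamma) (j0 := d)
    (F := fun i j => q i j * T i j (gamma * e + d * G)%N (d * D)%N)).
  - by rewrite mulf_neq0.
  - by have := leq_pmulr gamma e_gt0; lia.
  - by have := leq_pmulr d D_gt0; lia.
  move=> i j _ _ ne; apply/eqP; rewrite mulf_eq0; apply: contraT.
  rewrite negb_or => /andP[qij nz].
  by have := heavy _ _ _ _ qij ne nz; rewrite ltxx.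
move=> a b /comp2_neq0[i [j [qij nz]]] ne_ab.
case: (boolP ((i != gamma) || (j != d))) => [ne|]; first exact: heavy ne nz.
rewrite negb_or !negbK => /andP[/eqP ei /eqP ej]; subst i j.
exact: lead_rest nz ne_ab.
Qed.

End Composition.

Lemma wt_gamma_nS (l : R) n :
  wt l (gamma_n gamma delta d n.+1) (d ^ n.+1) =
  (delta ^ n)%:R * gamma%:R + wt l (gamma_n gamma delta d n) (d ^ n) * d%:R.
Proof. by rewrite gamma_nS expnS /wt !natrD !natrM; ring. Qed.

Lemma wt_gamma_n_gt0 (l : R) n : 0 < l -> 0 < wt l (gamma_n gamma delta d n) (d ^ n).
Proof. by move=> l_gt0; rewrite /wt ltr_wpDl // mulr_gt0 // ltr0n expn_gt0 d_gt0. Qed.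

Lemma Qiter_weight_lb l n : 0 < l -> A * l <= B ->
  weight_lb l (wt l (gamma_n gamma delta d n) (d ^ n)) (Qiter p q n).
Proof.
move=> l_gt0 slope_l; elim: n => [|n IH].
  by rewrite gamma_n0 expn0; exact: strict_lead_lb (strict_lead_monom l 0 1).
have [u_low u_e] := piter_order delta_gt0 p_delta p_low n.
rewrite wt_gamma_nS; apply: comp2_weight_lb => //; first by rewrite expn_gt0 delta_gt0.
  exact/ltW/wt_gamma_n_gt0.
have := weight_budget n l; have : 0 <= (d ^ n)%:R * (B - A * l) :> R.
  by rewrite mulr_ge0 // subr_ge0.
lra.
Qed.

Lemma Qiter_strict_lead l n : 0 < l -> A * l < B ->
  strict_lead l (gamma_n gamma delta d n) (d ^ n) (Qiter p q n).
Proof.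
move=> l_gt0 slope_l; elim: n => [|n IH].
  by rewrite gamma_n0 expn0; exact: strict_lead_monom.
have [u_low u_e] := piter_order delta_gt0 p_delta p_low n.
rewrite gamma_nS expnS; apply: comp2_strict_lead => //.
- by rewrite expn_gt0 delta_gt0.
- by rewrite expn_gt0 d_gt0.
- exact: wt_gamma_n_gt0.
have := weight_budget n l; have : 0 < (d ^ n)%:R * (B - A * l) :> R.
  by rewrite mulr_gt0 // ?subr_gt0 // ltr0n expn_gt0 d_gt0.
lra.
Qed.

End Iteration.

Lemma least_nat (P : nat -> Prop) :
  (exists n, P n) -> exists n, P n /\ forall m, P m -> (n <= m)%N.
Proof.
move=> exP; have [n [[Pn n_min] _]] :=
  Wf_nat.dec_inh_nat_subset_has_unique_least_element P
    (fun n => Classical_Prop.classic (P n)) exP.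
by exists n; split=> // m /n_min /ssrnat.leP.
Qed.

Section NewtonPolygon.
Variables (R : realType) (g : ser2 R).

Definition lin (a b : R) (P : R * R) : R := a * P.1 + b * P.2.

Lemma lin_conv a b k (c : 'I_k -> R) (pt : 'I_k -> R * R) :
  lin a b (\sum_(t < k) c t * (pt t).1, \sum_(t < k) c t * (pt t).2) =
  \sum_(t < k) c t * lin a b (pt t).
Proof.
rewrite /lin /= !mulr_sumr -big_split /=.
by apply: eq_bigr => t _; ring.
Qed.

Lemma np_quad Q : quadrants g Q -> newton_polygon g Q.
Proof.
move=> gQ; exists 1%N, (fun _ => 1), (fun _ => Q).
split=> [_|]; first exact: ler01.
by rewrite !big_ord1 !mul1r; do 2!split=> //; case: Q {gQ}.
Qed.

Section LinearForm.
Variables (a b m : R).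
Hypotheses (a_ge0 : 0 <= a) (b_ge0 : 0 <= b).
Hypothesis supp_lb : forall i j, g i j != 0 -> m <= a * i%:R + b * j%:R.

Lemma quad_lin_lb Q : quadrants g Q -> m <= lin a b Q.
Proof.
move=> [i [j [gij [le_i le_j]]]]; apply: le_trans (supp_lb gij) _.
by rewrite lerD // ler_wpM2l.
Qed.

Lemma np_lin_lb P : newton_polygon g P -> m <= lin a b P.
Proof.
move=> [k [c [pt [c_ge0 [c_sum [c_quad ->]]]]]].
rewrite lin_conv -[m]mul1r -c_sum mulr_suml; apply: ler_sum => t _.
by rewrite ler_wpM2l // quad_lin_lb.
Qed.

Lemma np_face_lb (a' b' m' : R) :
  (forall Q, quadrants g Q -> lin a b Q = m -> m' <= lin a' b' Q) ->
  forall P, newton_polygon g P -> lin a b P = m -> m' <= lin a' b' P.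
Proof.
move=> face_lb P [k [c [pt [c_ge0 [c_sum [c_quad ->]]]]]].
rewrite !lin_conv => onface.
have gaps_ge0 : forall t, true -> 0 <= c t * (lin a b (pt t) - m).
  by move=> t _; rewrite mulr_ge0 // subr_ge0 quad_lin_lb.
have gaps0 : \sum_(t < k) c t * (lin a b (pt t) - m) = 0.
  under eq_bigr => t _ do rewrite mulrBr.
  by rewrite sumrB -mulr_suml c_sum mul1r onface subrr.
rewrite -[m']mul1r -c_sum mulr_suml; apply: ler_sum => t _.
move/eqP: (psumr_eq0P gaps_ge0 gaps0 (i := t) isT); rewrite mulf_eq0 subr_eq0.
case/orP => [/eqP -> | /eqP onface_t]; first by rewrite !mul0r.
by rewrite ler_wpM2l // face_lb.
Qed.

End LinearForm.

Lemma np_shift P v1 v2 : newton_polygon g P -> 0 <= v1 -> 0 <= v2 ->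
  newton_polygon g (P.1 + v1, P.2 + v2).
Proof.
move=> [k [c [pt [c_ge0 [c_sum [c_quad ->]]]]]] v1_ge0 v2_ge0 /=.
exists k, c, (fun t => ((pt t).1 + v1, (pt t).2 + v2)); do 3!split=> //.
  move=> t; have [i [j [gij [le_i le_j]]]] := c_quad t.
  by exists i, j; split=> //=; lra.
by congr (_, _); under [RHS]eq_bigr => t _ do rewrite mulrDr;
   rewrite big_split /= -mulr_suml c_sum mul1r.
Qed.

Lemma np_segment A B s : quadrants g A -> quadrants g B -> 0 <= s <= 1 ->
  newton_polygon g (s * A.1 + (1 - s) * B.1, s * A.2 + (1 - s) * B.2).
Proof.
move=> gA gB /andP[s_ge0 s_le1].
exists 2%N, (fun t : 'I_2 => if t == ord0 then s else 1 - s),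
  (fun t : 'I_2 => if t == ord0 then A else B).
split=> [t|]; first by case: ifP => _; lra.
split; first by rewrite big_ord_recl big_ord1 /=; ring.
split=> [t|]; first by case: ifP.
by rewrite !big_ord_recl !big_ord0 /= !addr0.
Qed.

(* No other point of the Newton polygon lies weakly below-left of a vertex:
   the vertex would be the midpoint of that point and its mirror image. *)
Lemma vertex_minimal P Q : np_vertex g P -> newton_polygon g Q ->
  Q.1 <= P.1 -> Q.2 <= P.2 -> P = Q.
Proof.
case: P => x y; case: Q => x' y' [gP extreme] gQ /= le_x le_y.
have gmirror : newton_polygon g (x' + 2 * (x - x'), y' + 2 * (y - y')).
  by apply: (np_shift gQ); lra.
have [ex ey] : (x', y') = (x' + 2 * (x - x'), y' + 2 * (y - y')).
  apply: (extreme _ _ 2^-1 gQ gmirror); first by apply/andP; lra.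
  by congr (_, _); rewrite /=; field.
by congr (_, _); lra.
Qed.

Lemma lex_min_vertex (a b m a' b' m' : R) P0 : 0 <= a -> 0 <= b ->
  a * b' - a' * b != 0 ->
  (forall i j, g i j != 0 -> m <= a * i%:R + b * j%:R) ->
  (forall Q, quadrants g Q -> lin a b Q = m -> m' <= lin a' b' Q) ->
  newton_polygon g P0 -> lin a b P0 = m -> lin a' b' P0 = m' -> np_vertex g P0.
Proof.
move=> a_ge0 b_ge0 det_neq0 supp_lb face_lb gP0 onface0 onface0'.
split=> // A B t gA gB /andP[t_gt0 t_lt1] eP0.
have on_both : forall a1 b1 m1 : R, m1 <= lin a1 b1 A -> m1 <= lin a1 b1 B ->
    lin a1 b1 P0 = m1 -> lin a1 b1 A = m1 /\ lin a1 b1 B = m1.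
  move=> a1 b1 m1 lbA lbB; rewrite eP0.
  have -> : lin a1 b1 (t * A.1 + (1 - t) * B.1, t * A.2 + (1 - t) * B.2) =
    t * lin a1 b1 A + (1 - t) * lin a1 b1 B by rewrite /lin /=; ring.
  move=> e; have gapA : 0 <= t * (lin a1 b1 A - m1) by rewrite mulr_ge0 ?subr_ge0 //; lra.
  have gapB : 0 <= (1 - t) * (lin a1 b1 B - m1) by rewrite mulr_ge0 ?subr_ge0 //; lra.
  have /eqP : t * (lin a1 b1 A - m1) = 0 by lra.
  have /eqP : (1 - t) * (lin a1 b1 B - m1) = 0 by lra.
  have t'_gt0 : 0 < 1 - t by lra.
  by rewrite !mulf_eq0 (gt_eqF t_gt0) (gt_eqF t'_gt0) !subr_eq0 /= => /eqP -> /eqP ->.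
have [eA eB] := on_both _ _ _ (np_lin_lb a_ge0 b_ge0 supp_lb gA)
  (np_lin_lb a_ge0 b_ge0 supp_lb gB) onface0.
have [eA' eB'] := on_both _ _ _ (np_face_lb a_ge0 b_ge0 supp_lb face_lb gA eA)
  (np_face_lb a_ge0 b_ge0 supp_lb face_lb gB eB) onface0'.
case: A B {gA gB eP0 on_both} eA eA' eB eB' => [x y] [x' y']; rewrite /lin /=.
move=> eA eA' eB eB'.
have ex : (a * b' - a' * b) * (x - x') = 0.
  have -> : (a * b' - a' * b) * (x - x') = b' * ((a * x + b * y) - (a * x' + b * y'))
    - b * ((a' * x + b' * y) - (a' * x' + b' * y')) by ring.
  by rewrite eA eB eA' eB' !subrr !mulr0 subr0.
have ey : (a * b' - a' * b) * (y - y') = 0.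
  have -> : (a * b' - a' * b) * (y - y') = a * ((a' * x + b' * y) - (a' * x' + b' * y'))
    - a' * ((a * x + b * y) - (a * x' + b * y')) by ring.
  by rewrite eA eB eA' eB' !subrr !mulr0 subr0.
move/eqP: ex; move/eqP: ey; rewrite !mulf_eq0 (negPf det_neq0) !subr_eq0 /=.
by move=> /eqP -> /eqP ->.
Qed.

End NewtonPolygon.

Section LexMin.
Variables (R : realType) (g : ser2 R).

Lemma lex_min_vertex_exists (a b a' b' : nat) :
  (exists i j, g i j != 0) -> (a * b' != a' * b)%N ->
  exists x y, [/\ g x y != 0, np_vertex g (x%:R, y%:R),
    forall P, newton_polygon g P -> lin a%:R b%:R (x%:R, y%:R) <= lin a%:R b%:R P &
    forall P, newton_polygon g P -> lin a%:R b%:R P = lin a%:R b%:R (x%:R, y%:R) ->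
      lin a'%:R b'%:R (x%:R, y%:R) <= lin a'%:R b'%:R P].
Proof.
move=> [i0 [j0 g0]] det.
have [v [[i1 [j1 [g1 e1]]] v_min]] := least_nat
  (P := fun v => exists i j, g i j != 0 /\ (a * i + b * j)%N = v)
  (ex_intro _ _ (ex_intro _ i0 (ex_intro _ j0 (conj g0 erefl)))).
have [v' [[x [y [[gxy exy] exy']]] v'_min]] := least_nat
  (P := fun v' => exists i j, (g i j != 0 /\ (a * i + b * j)%N = v) /\
                              (a' * i + b' * j)%N = v')
  (ex_intro _ _ (ex_intro _ i1 (ex_intro _ j1 (conj (conj g1 e1) erefl)))).
have linE : forall a1 b1 i j : nat,
    lin a1%:R b1%:R (i%:R, j%:R) = (a1 * i + b1 * j)%N%:R :> R.
  by move=> *; rewrite /lin /= natrD !natrM.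
have supp_lb : forall i j, g i j != 0 -> v%:R <= a%:R * i%:R + b%:R * j%:R :> R.
  by move=> i j gij; rewrite -!natrM -natrD ler_nat; apply: v_min; exists i, j.
have face_lb : forall Q, quadrants g Q ->
    lin a%:R b%:R Q = v%:R -> v'%:R <= lin a'%:R b'%:R Q.
  move=> [X Y] [i [j [gij [/= le_i le_j]]]]; rewrite /lin /= => onface.
  have le_a : a%:R * i%:R <= a%:R * X :> R by rewrite ler_wpM2l.
  have le_b : b%:R * j%:R <= b%:R * Y :> R by rewrite ler_wpM2l.
  have le_a' : a'%:R * i%:R <= a'%:R * X :> R by rewrite ler_wpM2l.
  have le_b' : b'%:R * j%:R <= b'%:R * Y :> R by rewrite ler_wpM2l.
  have eij : (a * i + b * j)%N = v.
    apply/eqP; rewrite -(eqr_nat R) natrD !natrM; have := supp_lb _ _ gij; lra.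
  have : v'%:R <= a'%:R * i%:R + b'%:R * j%:R :> R.
    by rewrite -!natrM -natrD ler_nat; apply: v'_min; exists i, j.
  lra.
have a_ge0 : 0 <= a%:R :> R by []. have b_ge0 : 0 <= b%:R :> R by [].
exists x, y; rewrite !linE exy exy'; split=> //.
- apply: (lex_min_vertex a_ge0 b_ge0 _ supp_lb face_lb); rewrite ?linE ?exy ?exy' //.
    by rewrite -!natrM subr_eq0 eqr_nat.
  by apply: np_quad; exists x, y.
- by move=> P gP; exact: (np_lin_lb a_ge0 b_ge0 supp_lb gP).
- by move=> P gP; exact: (np_face_lb a_ge0 b_ge0 supp_lb face_lb gP).
Qed.

End LexMin.

Section FirstEdge.
Variables (R : realType) (q : ser2 R) (gamma d n2 m2 : nat).
Hypothesis q_neq0 : exists i j, q i j != 0.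
Hypothesis vertex1 : np_vertex q (gamma%:R, d%:R).
Hypothesis vertex1_leftmost : forall P, np_vertex q P -> gamma%:R <= P.1.
Hypothesis vertex2 : np_vertex q (n2%:R, m2%:R).
Hypothesis gamma_lt_n2 : (gamma < n2)%N.
Hypothesis vertex2_next :
  forall P, np_vertex q P -> P <> (gamma%:R, d%:R) -> n2%:R <= P.1.

Lemma quad_support i j : q i j != 0 -> newton_polygon q (i%:R, j%:R).
Proof. by move=> qij; apply: np_quad; exists i, j. Qed.

(* The first vertex (gamma, d) is the lowest point of the leftmost column
   of the support, which lies to the right of gamma. *)
Lemma first_vertex_support :
  q gamma d != 0 /\ forall i j, q i j != 0 -> (gamma <= i)%N.
Proof.
have [x0 [y0 [qx0y0 vertex0 x_min y_min]]] :=
  lex_min_vertex_exists (a := 1) (b := 0) (a' := 0) (b' := 1) q_neq0 isT.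
have linx : forall P : R * R, lin 1 0 P = P.1 by move=> P; rewrite /lin mul1r mul0r addr0.
have liny : forall P : R * R, lin 0 1 P = P.2 by move=> P; rewrite /lin mul1r mul0r add0r.
have x0E : x0 = gamma.
  apply/eqP; rewrite -(eqr_nat R) eq_le (vertex1_leftmost vertex0).
  by rewrite andbT; have := x_min _ vertex1.1; rewrite !linx.
have [_ d_E] : (gamma%:R, d%:R) = (x0%:R, y0%:R) :> R * R.
  apply: vertex_minimal vertex1 vertex0.1 _ _; rewrite /= ?x0E //.
  by have := y_min _ vertex1.1; rewrite !linx !liny x0E; apply.
move/eqP: d_E; rewrite eqr_nat => /eqP d_E; rewrite -x0E d_E; split=> // i j qij.
by have := x_min _ (quad_support qij); rewrite !linx /= ler_nat.
Qed.

Lemma second_vertex_lower : (m2 < d)%N.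
Proof.
rewrite ltnNge; apply/negP => le_d_m2; have [qgd _] := first_vertex_support.
have [n2E _] : (n2%:R, m2%:R) = (gamma%:R, d%:R) :> R * R.
  by apply: vertex_minimal vertex2 (quad_support qgd) _ _; rewrite /= ler_nat // ltnW.
by move/eqP: n2E; rewrite eqr_nat => /eqP n2E; move: gamma_lt_n2; rewrite n2E ltnn.
Qed.

Lemma edge_support i j : q i j != 0 ->
  (d%:R - m2%:R) * gamma%:R + (n2%:R - gamma%:R) * d%:R <=
  (d%:R - m2%:R) * i%:R + (n2%:R - gamma%:R) * j%:R :> R.
Proof.
have [qgd _] := first_vertex_support.
have AE : d%:R - m2%:R = (d - m2)%N%:R :> R.
  by rewrite natrB // ltnW // second_vertex_lower.
have BE : n2%:R - gamma%:R = (n2 - gamma)%N%:R :> R by rewrite natrB // ltnW.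
have B_gt0 : 0 < n2%:R - gamma%:R :> R by rewrite subr_gt0 ltr_nat.
have det : ((d - m2) * 0 != 1 * (n2 - gamma))%N.
  by rewrite muln0 mul1n eq_sym -lt0n subn_gt0.
have [xs [ys [qs vertexs lin_min _]]] := lex_min_vertex_exists q_neq0 det.
rewrite -AE -BE in lin_min.
set L := lin (d%:R - m2%:R) (n2%:R - gamma%:R) in lin_min *.
have linE : forall x y : R, L (x, y) =
  (d%:R - m2%:R) * x + (n2%:R - gamma%:R) * y by [].
suff edge_min : L (gamma%:R, d%:R) <= L (xs%:R, ys%:R).
  by move=> qij; rewrite -!linE; exact: le_trans edge_min (lin_min _ (quad_support qij)).
case: (eqVneq (xs%:R, ys%:R) ((gamma%:R, d%:R) : R * R)) => [-> //|ne].
have n2_le_xs : n2%:R <= xs%:R :> R.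
  by apply: (vertex2_next vertexs) => /eqP; rewrite (negPf ne).
rewrite leNgt; apply/negP => below.
(* the point of the segment from (gamma, d) to (xs, ys) with abscissa n2
   would lie strictly below the vertex (n2, m2) *)
have xs_gt : 0 < xs%:R - gamma%:R :> R by lra.
pose s : R := (xs%:R - n2%:R) / (xs%:R - gamma%:R).
have s_ge0 : 0 <= s by apply: divr_ge0; lra.
have s'E : 1 - s = (n2%:R - gamma%:R) / (xs%:R - gamma%:R) by rewrite /s; field; lra.
have s'_gt0 : 0 < 1 - s by rewrite s'E divr_gt0.
have quad0 : quadrants q (gamma%:R, d%:R) by exists gamma, d.
have quads : quadrants q (xs%:R, ys%:R) by exists xs, ys.
have gQ := np_segment quad0 quads (s := s) ltac:(apply/andP; lra).
move: gQ; rewrite /=; set y := s * d%:R + (1 - s) * ys%:R.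
have -> : s * gamma%:R + (1 - s) * xs%:R = n2%:R by rewrite s'E /s; field; lra.
move=> gQ.
have linQ : L (n2%:R, y) = s * L (gamma%:R, d%:R) + (1 - s) * L (xs%:R, ys%:R).
  by rewrite !linE /y s'E /s; field; lra.
have lin_edge : L (gamma%:R, d%:R) = L (n2%:R, m2%:R) by rewrite !linE; ring.
have y_lt : y < m2%:R.
  have : L (n2%:R, y) < L (n2%:R, m2%:R) by rewrite -lin_edge linQ; nra.
  by rewrite !linE ltrD2l ltr_pM2l.
have [m2E] := vertex_minimal vertex2 gQ (lexx _) (ltW y_lt).
by move: y_lt; rewrite -m2E ltxx.
Qed.


End FirstEdge.

Section WeightRange.
Variables (R : realType) (gamma delta d : nat) (A B : R).
Hypotheses (A_gt0 : 0 < A) (B_gt0 : 0 < B).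

Lemma T1_slope :
  d%:R + gamma%:R * A / B <= delta%:R -> A * gamma%:R <= B * (delta%:R - d%:R).
Proof.
move=> T1; have : gamma%:R * A / B <= delta%:R - d%:R by lra.
by rewrite ler_pdivrMr // mulrC [B * _]mulrC.
Qed.

Lemma If_weight l : A * gamma%:R <= B * (delta%:R - d%:R) ->
  (if (0 < gamma)%N then gamma%:R / (delta%:R - d%:R) <= l <= B / A
   else 0 < l <= B / A) ->
  0 < l /\ A * l <= B.
Proof.
move=> slope l_If; suff [l_gt0 l_le] : 0 < l /\ l <= B / A.
  by split=> //; rewrite mulrC -ler_pdivlMr.
case: (ltnP 0 gamma) l_If => [gamma_gt0|_] /andP[lo ->]; split=> //.
apply: lt_le_trans lo; rewrite divr_gt0 ?ltr0n //.
have : 0 < B * (delta%:R - d%:R) by apply: lt_le_trans slope; rewrite mulr_gt0 ?ltr0n.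
by rewrite pmulr_rgt0.
Qed.

Lemma half_l2 : 0 < B / A / 2 /\ A * (B / A / 2) < B.
Proof.
split; first by rewrite !divr_gt0.
have -> : A * (B / A / 2) = B / 2 by field; rewrite gt_eqF.
by rewrite ltr_pdivrMr // ltr_pMr // ltr1n.
Qed.

End WeightRange.

Unset Implicit Arguments. Set Strict Implicit. Set Printing Implicit Defensive.

Theorem theorem5p1 (R : realType) (p : ser1 R) (q : ser2 R) (delta : nat)
  (gamma d n2 m2 : nat) :
  (* p(z) = a_delta z^delta + O(z^(delta+1)), a_delta <> 0, delta >= 1 *)
  (1 <= delta)%N -> p delta != 0 -> (forall i, (i < delta)%N -> p i = 0) ->
  (* q(0,0) = 0, q not identically zero *)
  q 0%N 0%N = 0 -> (exists i j, q i j != 0) ->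
  (* f is a holomorphic germ *)
  holo1 p -> holo2 q ->
  (* Case 3: (gamma,d) = (n_1,m_1) is the vertex of N(q) with least abscissa,
     (n2,m2) = (n_2,m_2) is the next vertex (so s > 1), and T_1 <= delta *)
  np_vertex q (gamma%:R, d%:R) ->
  (forall P, np_vertex q P -> gamma%:R <= P.1) ->
  np_vertex q (n2%:R, m2%:R) -> (gamma < n2)%N ->
  (forall P, np_vertex q P -> P <> (gamma%:R, d%:R) -> n2%:R <= P.1) ->
  d%:R + gamma%:R * (d%:R - m2%:R) / (n2%:R - gamma%:R) <= delta%:R :> R ->
  let l2 : R := (n2%:R - gamma%:R) / (d%:R - m2%:R) in
  let alpha : R := gamma%:R / (delta%:R - d%:R) in
  forall n : nat, (1 <= n)%N ->
    Qiter p q n (gamma_n gamma delta d n) (d ^ n)%N != 0 /\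
    forall l : R,
      (if (0 < gamma)%N then alpha <= l <= l2 else 0 < l <= l2) ->
      wl_is (Qiter p q n) l ((gamma_n gamma delta d n)%:R + l * (d ^ n)%:R) /\
      wl_is (monom R (gamma_n gamma delta d n) (d ^ n)%N) l
            ((gamma_n gamma delta d n)%:R + l * (d ^ n)%:R).
Proof.
move=> delta_gt0 p_delta p_low _ q_neq0 _ _ v1 v1_left v2 lt_n2 v2_next T1 l2 alpha n _.
have [q_first supp_right] := first_vertex_support q_neq0 v1 v1_left.
have m2_lt_d := second_vertex_lower q_neq0 v1 v1_left v2 lt_n2.
have d_gt0 : (0 < d)%N := leq_ltn_trans (leq0n m2) m2_lt_d.
have supp_edge := edge_support q_neq0 v1 v1_left v2 lt_n2 v2_next.
have A_gt0 : 0 < d%:R - m2%:R :> R by rewrite subr_gt0 ltr_nat.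
have B_gt0 : 0 < n2%:R - gamma%:R :> R by rewrite subr_gt0 ltr_nat.
have slope := T1_slope B_gt0 T1.
(* z^gamma_n w^(d^n) occurs in Q^n: it is strictly leading at weight l_2 / 2 *)
have [half_gt0 half_slope] := half_l2 A_gt0 B_gt0.
have [occurs _] := Qiter_strict_lead delta_gt0 p_delta p_low q_first d_gt0 A_gt0
  supp_right supp_edge slope n half_gt0 half_slope.
split=> // l /(If_weight A_gt0 B_gt0 slope) [l_gt0 slope_l].
split; apply: wl_is_weight_lb; rewrite ?/monom ?eqxx ?oner_neq0 //.
- exact: (Qiter_weight_lb delta_gt0 p_delta p_low d_gt0 A_gt0 supp_right supp_edge
          slope l_gt0 slope_l).
- exact: strict_lead_lb (strict_lead_monom l _ _).
Qed.
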